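(* Let $\pi:G\times X\to X$ be a continuous $\pi$-uniform action of a topological group $G$ on a Hausdorff non-archimedean uniform space $(X,\mu)$. Then there exist a Hausdorff non-archimedean Boolean topological group $E$, on which $G$ acts continuously by group automorphisms, and a $G$-equivariant map $\alpha:X\to E$ which is a uniform embedding of $(X,\mu)$ into $E$ equipped with its (right $=$ left) group uniformity, such that $\alpha(X)$ is closed in $E$.
   Context: A uniform space $(X,\mu)$ is non-archimedean if $\mu$ has a base consisting of entourages which are equivalence relations. An action $\pi:G\times X\to X$ on a uniform space is $\pi$-uniform if for every entourage $\varepsilon\in\mu$ and $g_0\in G$ there exist $\delta\in\mu$ and a neighborhood $O$ of $g_0$ such that $(gx,gy)\in\varepsilon$ for all $(x,y)\in\delta$ and $g\in O$. A Boolean group is an abelian group with $x+x=0$ for all $x$; a topological group is non-archimedean if it has a local base at the identity consisting of open subgroups. A uniform embedding is an injective map which is a uniform isomorphism onto its image. *)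

From Stdlib Require Import Classical.

Set Implicit Arguments.

Definition is_topology (X : Type) (open : (X -> Prop) -> Prop) : Prop :=
  open (fun _ => True) /\
  (forall A B, open A -> open B -> open (fun x => A x /\ B x)) /\
  (forall F : (X -> Prop) -> Prop, (forall A, F A -> open A) ->
     open (fun x => exists A, F A /\ A x)).

Definition nbhd_top (X : Type) (open : (X -> Prop) -> Prop) (x : X) (A : X -> Prop) : Prop :=
  exists O, open O /\ O x /\ forall y, O y -> A y.

Definition hausdorff_top (X : Type) (open : (X -> Prop) -> Prop) : Prop :=
  forall x y : X, x <> y -> exists U V, open U /\ open V /\ U x /\ V y /\
    forall z, ~ (U z /\ V z).

Definition closed_top (X : Type) (open : (X -> Prop) -> Prop) (C : X -> Prop) : Prop :=
  open (fun x => ~ C x).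

Definition is_uniformity (X : Type) (ent : (X -> X -> Prop) -> Prop) : Prop :=
  ent (fun _ _ => True) /\
  (forall U V, ent U -> (forall x y, U x y -> V x y) -> ent V) /\
  (forall U V, ent U -> ent V -> ent (fun x y => U x y /\ V x y)) /\
  (forall U, ent U -> forall x, U x x) /\
  (forall U, ent U -> ent (fun x y => U y x)) /\
  (forall U, ent U -> exists V, ent V /\ forall x y z, V x y -> V y z -> U x z).

Definition nbhd_unif (X : Type) (ent : (X -> X -> Prop) -> Prop) (x : X) (A : X -> Prop) : Prop :=
  exists U, ent U /\ forall y, U x y -> A y.

Definition hausdorff_unif (X : Type) (ent : (X -> X -> Prop) -> Prop) : Prop :=
  forall x y : X, (forall U, ent U -> U x y) -> x = y.

Definition equiv_rel (X : Type) (R : X -> X -> Prop) : Prop :=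
  (forall x, R x x) /\ (forall x y, R x y -> R y x) /\
  (forall x y z, R x y -> R y z -> R x z).

Definition non_archimedean_unif (X : Type) (ent : (X -> X -> Prop) -> Prop) : Prop :=
  forall U, ent U -> exists V, ent V /\ equiv_rel V /\ forall x y, V x y -> U x y.

Definition uniform_embedding (X Y : Type) (entX : (X -> X -> Prop) -> Prop)
    (entY : (Y -> Y -> Prop) -> Prop) (f : X -> Y) : Prop :=
  (forall x y, f x = f y -> x = y) /\
  (forall V, entY V -> exists U, entX U /\ forall x y, U x y -> V (f x) (f y)) /\
  (forall U, entX U -> exists V, entY V /\ forall x y, V (f x) (f y) -> U x y).

Definition continuous2 (A B C : Type) (NA : A -> (A -> Prop) -> Prop)
    (NB : B -> (B -> Prop) -> Prop) (NC : C -> (C -> Prop) -> Prop)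
    (f : A -> B -> C) : Prop :=
  forall a b W, NC (f a b) W ->
    exists U V, NA a U /\ NB b V /\ forall a' b', U a' -> V b' -> W (f a' b').

Definition continuous1 (A C : Type) (NA : A -> (A -> Prop) -> Prop)
    (NC : C -> (C -> Prop) -> Prop) (f : A -> C) : Prop :=
  forall a W, NC (f a) W -> exists U, NA a U /\ forall a', U a' -> W (f a').

Definition is_group (G : Type) (mul : G -> G -> G) (one : G) (inv : G -> G) : Prop :=
  (forall x y z, mul x (mul y z) = mul (mul x y) z) /\
  (forall x, mul one x = x) /\ (forall x, mul x one = x) /\
  (forall x, mul (inv x) x = one) /\ (forall x, mul x (inv x) = one).

Definition topological_group (G : Type) (mul : G -> G -> G) (one : G) (inv : G -> G)
    (open : (G -> Prop) -> Prop) : Prop :=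
  is_group mul one inv /\ is_topology open /\
  continuous2 (nbhd_top open) (nbhd_top open) (nbhd_top open) mul /\
  continuous1 (nbhd_top open) (nbhd_top open) inv.

(* Boolean group: abelian with x + x = 0 (so the inverse is the identity) *)
Definition boolean_group (E : Type) (add : E -> E -> E) (zero : E) : Prop :=
  is_group add zero (fun x => x) /\ (forall x y, add x y = add y x).

Definition non_archimedean_topgroup (G : Type) (mul : G -> G -> G) (one : G) (inv : G -> G)
    (open : (G -> Prop) -> Prop) : Prop :=
  forall A, nbhd_top open one A ->
    exists H : G -> Prop, open H /\ H one /\
      (forall x y, H x -> H y -> H (mul x y)) /\ (forall x, H x -> H (inv x)) /\
      (forall x, H x -> A x).

Definition group_uniformity (G : Type) (mul : G -> G -> G) (one : G) (inv : G -> G)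
    (open : (G -> Prop) -> Prop) (W : G -> G -> Prop) : Prop :=
  exists A, nbhd_top open one A /\ forall a b, A (mul (inv a) b) -> W a b.

Definition is_action (G X : Type) (mul : G -> G -> G) (one : G) (pi : G -> X -> X) : Prop :=
  (forall x, pi one x = x) /\ (forall g h x, pi (mul g h) x = pi g (pi h x)).

Definition pi_uniform (G X : Type) (openG : (G -> Prop) -> Prop)
    (ent : (X -> X -> Prop) -> Prop) (pi : G -> X -> X) : Prop :=
  forall eps, ent eps -> forall g0 : G,
    exists delta O, ent delta /\ nbhd_top openG g0 O /\
      forall g x y, O g -> delta x y -> eps (pi g x) (pi g y).

(* Let I be the family of subsets of X that are saturated for some entourage.  The
   Boolean group of maps I -> bool contains the evaluations [point x] (S |-> [x \in S]);
   E is the subgroup they span, with the subgroups N_V of maps vanishing on every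
   V-saturated set as a base at zero, and G acts by (g f)(S) = f (g^-1 S).  Pi-uniformity
   keeps g^-1 S in I and makes the action equicontinuous; continuity of pi makes orbits
   continuous.  Since the uniformity has a base of equivalence relations, V-classes lie in
   I: this separates V-distinct points in E, making x |-> point x a uniform embedding, and
   a sum of two or more distinct points takes the value 1 on two distinct classes of a fine
   enough V, which keeps it away from every single point, so the image is closed. *)

From Stdlib Require Import Classical ClassicalEpsilon FunctionalExtensionality List.

Set Implicit Arguments.

Section BooleanGroupAlgebra.
Variables (E : Type) (add : E -> E -> E) (zero : E).
Hypothesis HE : boolean_group add zero.

Lemma addA a b c : add a (add b c) = add (add a b) c.
Proof. now destruct HE as [[assoc _] _]. Qed.

Lemma addC a b : add a b = add b a.
Proof. now destruct HE as [_ comm]. Qed.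

Lemma add0x a : add zero a = a.
Proof. now destruct HE as [[_ [id_l _]] _]. Qed.

Lemma addx0 a : add a zero = a.
Proof. now destruct HE as [[_ [_ [id_r _]]] _]. Qed.

Lemma addxx a : add a a = zero.
Proof. now destruct HE as [[_ [_ [_ [inv_l _]]]] _]. Qed.

Lemma addKx a b : add a (add a b) = b.
Proof. now rewrite addA, addxx, add0x. Qed.

Lemma addCA a b c : add a (add b c) = add b (add a c).
Proof. now rewrite addA, (addC a b), <- addA. Qed.

Lemma addACA a b c d : add (add a b) (add c d) = add (add a c) (add b d).
Proof. now rewrite <- !addA, (addCA b c d). Qed.

Lemma add_telescope a b c : add a c = add (add a b) (add b c).
Proof. now rewrite <- addA, addKx. Qed.

End BooleanGroupAlgebra.

Section BooleanFunctions.
Variable I : Type.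

Definition bxor (f g : I -> bool) : I -> bool := fun i => xorb (f i) (g i).
Definition bzero : I -> bool := fun _ => false.

Lemma bool_fun_group : boolean_group bxor bzero.
Proof.
  repeat split; intros; apply functional_extensionality; intro i; unfold bxor, bzero;
    repeat match goal with f : I -> bool |- _ => destruct (f i); clear f end; reflexivity.
Qed.

End BooleanFunctions.

Arguments bzero {I}.

Definition pbool (P : Prop) : bool := if excluded_middle_informative P then true else false.

Lemma pbool_true (P : Prop) : pbool P = true <-> P.
Proof. unfold pbool; destruct (excluded_middle_informative P); intuition discriminate. Qed.

Lemma pbool_ext (P Q : Prop) : (P <-> Q) -> pbool P = pbool Q.
Proof.
  unfold pbool; destruct (excluded_middle_informative P), (excluded_middle_informative Q); tauto.
Qed.

Lemma nbhd_top_full (T : Type) (open : (T -> Prop) -> Prop) (t : T) :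
  is_topology open -> nbhd_top open t (fun _ => True).
Proof. intros [open_full _]; now exists (fun _ => True). Qed.

Lemma nbhd_top_and (T : Type) (open : (T -> Prop) -> Prop) (t : T) (A B : T -> Prop) :
  is_topology open -> nbhd_top open t A -> nbhd_top open t B ->
  nbhd_top open t (fun s => A s /\ B s).
Proof.
  intros [_ [open_and _]] [OA [oA [tA hA]]] [OB [oB [tB hB]]].
  exists (fun s => OA s /\ OB s); split; [now apply open_and|]; split; [now split|].
  intros s [? ?]; split; auto.
Qed.

Section CosetTopology.
Variables (E : Type) (add : E -> E -> E) (zero : E).
Hypothesis HE : boolean_group add zero.
Variables (J : Type) (admissible : J -> Prop) (N : J -> E -> Prop).
Hypothesis N_zero : forall j, N j zero.
Hypothesis N_add : forall j a b, N j a -> N j b -> N j (add a b).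
Hypothesis admissible_inhabited : exists j, admissible j.
Hypothesis N_directed : forall j1 j2, admissible j1 -> admissible j2 ->
  exists j, admissible j /\ forall a, N j a -> N j1 a /\ N j2 a.

Definition coset_open (O : E -> Prop) : Prop :=
  forall a, O a -> exists j, admissible j /\ forall b, N j (add b a) -> O b.

Lemma coset_open_topology : is_topology coset_open.
Proof.
  split; [|split].
  - intros a _; destruct admissible_inhabited as [j hj]; now exists j.
  - intros A B hA hB a [ha hb].
    destruct (hA a ha) as [jA [aA hA']], (hB a hb) as [jB [aB hB']].
    destruct (N_directed aA aB) as [j [aj hj]].
    exists j; split; [exact aj|]; intros b hba; split; [apply hA' | apply hB']; apply hj; exact hba.
  - intros F hF a [A [FA Aa]]; destruct (hF A FA a Aa) as [j [aj hj]].
    exists j; split; [exact aj|]; intros b hb; exists A; auto.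
Qed.

Lemma coset_open_coset j a : admissible j -> coset_open (fun b => N j (add b a)).
Proof.
  intros aj b hb; exists j; split; [exact aj|]; intros c hc.
  rewrite (add_telescope HE c b a); auto.
Qed.

Lemma nbhd_coset_open a A :
  nbhd_top coset_open a A <-> exists j, admissible j /\ forall b, N j (add b a) -> A b.
Proof.
  split.
  - intros [O [oO [Oa hO]]]; destruct (oO a Oa) as [j [aj hj]]; exists j; auto.
  - intros [j [aj hj]]; exists (fun b => N j (add b a)).
    split; [now apply coset_open_coset|]; split; [rewrite (addxx HE); apply N_zero | exact hj].
Qed.

Lemma coset_open_topological_group : topological_group add zero (fun a => a) coset_open.
Proof.
  split; [exact (proj1 HE)|]; split; [exact coset_open_topology|]; split.
  - intros a b W hW; apply nbhd_coset_open in hW; destruct hW as [j [aj hW]].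
    exists (fun a' => N j (add a' a)), (fun b' => N j (add b' b)).
    split; [apply nbhd_coset_open; now exists j|]; split; [apply nbhd_coset_open; now exists j|].
    intros a' b' ha hb; apply hW; rewrite (addACA HE); auto.
  - intros a W hW; now exists W.
Qed.

Lemma coset_open_non_archimedean : non_archimedean_topgroup add zero (fun a => a) coset_open.
Proof.
  intros A hA; apply nbhd_coset_open in hA; destruct hA as [j [aj hA]].
  exists (N j); split; [|split; [apply N_zero|split; [intros; now apply N_add|split; [auto|]]]].
  - intros a ha; exists j; split; [exact aj|]; intros b hb.
    replace b with (add (add b a) a) by now rewrite <- (addA HE), (addxx HE), (addx0 HE).
    auto.
  - intros a ha; apply hA; now rewrite (addx0 HE).
Qed.

Lemma coset_open_hausdorff :
  (forall a, (forall j, admissible j -> N j a) -> a = zero) -> hausdorff_top coset_open.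
Proof.
  intros separated a b ab.
  assert (hj : exists j, admissible j /\ ~ N j (add a b)).
  { apply NNPP; intro hn; apply ab.
    rewrite <- (addKx HE a b), (separated (add a b)), (addx0 HE); [reflexivity|].
    intros j aj; apply NNPP; intro nj; apply hn; now exists j. }
  destruct hj as [j [aj nj]].
  exists (fun c => N j (add c a)), (fun c => N j (add c b)).
  split; [now apply coset_open_coset|]; split; [now apply coset_open_coset|].
  split; [rewrite (addxx HE); apply N_zero|]; split; [rewrite (addxx HE); apply N_zero|].
  intros c [ca cb]; apply nj.
  rewrite <- (add0x HE (add a b)), <- (addxx HE c), <- (addACA HE); auto.
Qed.

Lemma group_uniformity_coset_open W :
  group_uniformity add zero (fun a => a) coset_open W <->
  exists j, admissible j /\ forall a b, N j (add a b) -> W a b.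
Proof.
  split.
  - intros [A [hA hW]]; apply nbhd_coset_open in hA; destruct hA as [j [aj hA]].
    exists j; split; [exact aj|]; intros a b hab; apply hW, hA; now rewrite (addx0 HE).
  - intros [j [aj hW]]; exists (N j); split; [|exact hW].
    apply nbhd_coset_open; exists j; split; [exact aj|]; intros b; now rewrite (addx0 HE).
Qed.

Variables (G : Type) (openG : (G -> Prop) -> Prop) (tau : G -> E -> E).
Hypothesis HtopG : is_topology openG.
Hypothesis tau_additive : forall g a b, tau g (add a b) = add (tau g a) (tau g b).
Hypothesis tau_equicontinuous : forall g j, admissible j ->
  exists O j', nbhd_top openG g O /\ admissible j' /\ forall g' a, O g' -> N j' a -> N j (tau g' a).
Hypothesis tau_orbit_continuous : forall g a j, admissible j -> exists O, nbhd_top openG g O /\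
  forall g', O g' -> N j (add (tau g' a) (tau g a)).

Lemma coset_open_action_continuous :
  continuous2 (nbhd_top openG) (nbhd_top coset_open) (nbhd_top coset_open) tau.
Proof.
  intros g a W hW; apply nbhd_coset_open in hW; destruct hW as [j [aj hW]].
  destruct (tau_equicontinuous g aj) as [O1 [j' [hO1 [aj' hequi]]]].
  destruct (tau_orbit_continuous g a aj) as [O2 [hO2 horbit]].
  exists (fun g' => O1 g' /\ O2 g'), (fun b => N j' (add b a)).
  split; [now apply nbhd_top_and|]; split; [apply nbhd_coset_open; now exists j'|].
  intros g' b [o1 o2] hb; apply hW.
  rewrite (add_telescope HE _ (tau g' a)), <- tau_additive; auto.
Qed.

End CosetTopology.

Section UniformSpace.
Variables (X : Type) (ent : (X -> X -> Prop) -> Prop).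
Hypothesis Hunif : is_uniformity ent.

Lemma ent_full : ent (fun _ _ => True).
Proof. exact (proj1 Hunif). Qed.

Lemma ent_inhabited : exists V, ent V.
Proof. exists (fun _ _ => True); exact ent_full. Qed.

Lemma ent_and U V : ent U -> ent V -> ent (fun x y => U x y /\ V x y).
Proof. destruct Hunif as [_ [_ [h _]]]; auto. Qed.

Lemma ent_refl U x : ent U -> U x x.
Proof. destruct Hunif as [_ [_ [_ [h _]]]]; intro hU; exact (h U hU x). Qed.

Lemma ent_sym_and U : ent U -> ent (fun x y => U x y /\ U y x).
Proof. destruct Hunif as [_ [_ [_ [_ [h _]]]]]; intro hU; apply ent_and; auto. Qed.

Lemma ent_list_and (A : Type) (P : A -> (X -> X -> Prop) -> Prop) (l : list A) :
  (forall a U V, (forall x y, V x y -> U x y) -> P a U -> P a V) ->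
  (forall a, In a l -> exists U, ent U /\ P a U) ->
  exists U, ent U /\ forall a, In a l -> P a U.
Proof.
  intros P_mono hl; induction l as [|a l IH].
  - exists (fun _ _ => True); split; [exact ent_full | intros _ []].
  - destruct (hl a (or_introl eq_refl)) as [Ua [hUa Pa]].
    destruct IH as [U [hU PU]]; [intros b hb; apply hl; now right|].
    exists (fun x y => Ua x y /\ U x y); split; [now apply ent_and|].
    intros b [<-|hb]; [apply (P_mono _ Ua) | apply (P_mono _ U)]; try tauto; auto.
Qed.

Hypothesis Hhaus : hausdorff_unif ent.
Hypothesis Hna : non_archimedean_unif ent.

Lemma separating_equiv_ent (l : list X) :
  exists V, ent V /\ equiv_rel V /\ forall y z, In y l -> In z l -> V y z -> y = z.
Proof.
  destruct (@ent_list_and _ (fun p U => U (fst p) (snd p) -> fst p = snd p) (list_prod l l))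
    as [U [hU sepU]].
  - intros [y z] U V VU; simpl; auto.
  - intros [y z] _; simpl; destruct (classic (y = z)) as [yz|yz].
    + exists (fun _ _ => True); split; [exact ent_full | auto].
    + apply NNPP; intro hn; apply yz, Hhaus; intros U hU.
      apply NNPP; intro nU; apply hn; exists U; tauto.
  - destruct (Hna hU) as [V [hV [eqV VU]]].
    exists V; split; [exact hV|]; split; [exact eqV|].
    intros y z hy hz hyz; apply (sepU (y, z)); [now apply in_prod | now apply VU].
Qed.

End UniformSpace.

Section PointSpan.
Variables (X : Type) (ent : (X -> X -> Prop) -> Prop).
Hypothesis Hunif : is_uniformity ent.

Definition saturated (V : X -> X -> Prop) (S : X -> Prop) : Prop :=
  forall x y, V x y -> S x -> S y.

Definition SatSet : Type := {S : X -> Prop | exists V, ent V /\ saturated V S}.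

Definition point (x : X) : SatSet -> bool := fun S => pbool (proj1_sig S x).

Fixpoint sum_points (l : list X) : SatSet -> bool :=
  match l with nil => bzero | x :: l => bxor (point x) (sum_points l) end.

Definition small (V : X -> X -> Prop) (f : SatSet -> bool) : Prop :=
  forall S : SatSet, saturated V (proj1_sig S) -> f S = false.

Definition PointSpan : Type := {f : SatSet -> bool | exists l, f = sum_points l}.

Lemma sat_set_eq (S T : SatSet) : proj1_sig S = proj1_sig T -> S = T.
Proof. destruct S, T; simpl; intros ->; f_equal; apply proof_irrelevance. Qed.

Lemma span_eq (a b : PointSpan) : proj1_sig a = proj1_sig b -> a = b.
Proof. destruct a, b; simpl; intros ->; f_equal; apply proof_irrelevance. Qed.

Lemma sum_points_app l1 l2 : sum_points (l1 ++ l2) = bxor (sum_points l1) (sum_points l2).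
Proof.
  induction l1 as [|x l IH]; simpl.
  - now rewrite (add0x (bool_fun_group _)).
  - now rewrite IH, (addA (bool_fun_group _)).
Qed.

Definition span_add (a b : PointSpan) : PointSpan.
Proof.
  exists (bxor (proj1_sig a) (proj1_sig b)).
  destruct (proj2_sig a) as [la ->], (proj2_sig b) as [lb ->].
  exists (la ++ lb); now rewrite sum_points_app.
Defined.

Definition span_zero : PointSpan := exist _ bzero (ex_intro _ nil eq_refl).

Lemma span_boolean_group : boolean_group span_add span_zero.
Proof.
  pose proof (bool_fun_group SatSet) as HR.
  repeat split; intros; apply span_eq; simpl.
  - apply (addA HR).
  - apply (add0x HR).
  - apply (addx0 HR).
  - apply (addxx HR).
  - apply (addxx HR).
  - apply (addC HR).
Qed.

Lemma small_mono V V' f : (forall x y, V x y -> V' x y) -> small V f -> small V' f.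
Proof. intros VV' hf S sat; apply hf; intros x y v; apply sat; auto. Qed.

Lemma small_zero V : small V bzero.
Proof. intros S _; reflexivity. Qed.

Lemma small_bxor V f g : small V f -> small V g -> small V (bxor f g).
Proof. intros hf hg S sat; unfold bxor; now rewrite (hf S sat), (hg S sat). Qed.

Lemma small_bxor_agree V f g (S : SatSet) :
  small V (bxor f g) -> saturated V (proj1_sig S) -> f S = g S.
Proof. intros h sat; specialize (h S sat); unfold bxor in h; now destruct (f S), (g S). Qed.

Lemma small_point_bxor V x y : V x y -> V y x -> small V (bxor (point x) (point y)).
Proof.
  intros vxy vyx S sat; unfold bxor, point.
  rewrite (@pbool_ext (proj1_sig S x) (proj1_sig S y)); [apply Bool.xorb_nilpotent|].
  split; apply sat; assumption.
Qed.

Lemma small_everywhere_zero f : (forall V, ent V -> small V f) -> f = bzero.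
Proof.
  intro hf; apply functional_extensionality; intros [S [V [hV sat]]].
  exact (hf V hV (exist _ S (ex_intro _ V (conj hV sat))) sat).
Qed.

Definition small_span (V : X -> X -> Prop) (a : PointSpan) : Prop := small V (proj1_sig a).

Definition span_open : (PointSpan -> Prop) -> Prop := coset_open span_add ent small_span.

Lemma small_span_zero V : small_span V span_zero.
Proof. apply small_zero. Qed.

Lemma small_span_add V a b : small_span V a -> small_span V b -> small_span V (span_add a b).
Proof. apply small_bxor. Qed.

Lemma small_span_directed V1 V2 : ent V1 -> ent V2 ->
  exists V, ent V /\ forall a, small_span V a -> small_span V1 a /\ small_span V2 a.
Proof.
  intros h1 h2; exists (fun x y => V1 x y /\ V2 x y); split; [now apply ent_and|].
  intros a ha; split; apply small_mono with (V := fun x y => V1 x y /\ V2 x y);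
    solve [exact ha | intros; tauto].
Qed.

Lemma small_span_separated a : (forall V, ent V -> small_span V a) -> a = span_zero.
Proof. intro ha; apply span_eq, small_everywhere_zero, ha. Qed.

Lemma span_topological_group : topological_group span_add span_zero (fun a => a) span_open.
Proof.
  exact (coset_open_topological_group span_boolean_group ent small_span small_span_zero
    small_span_add (ent_inhabited Hunif) small_span_directed).
Qed.

Lemma span_hausdorff : hausdorff_top span_open.
Proof.
  exact (coset_open_hausdorff span_boolean_group ent small_span small_span_zero
    small_span_add small_span_separated).
Qed.

Lemma span_non_archimedean : non_archimedean_topgroup span_add span_zero (fun a => a) span_open.
Proof. exact (coset_open_non_archimedean span_boolean_group small_span_zero small_span_add). Qed.

Lemma group_uniformity_span W :
  group_uniformity span_add span_zero (fun a => a) span_open W <->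
  exists V, ent V /\ forall a b, small_span V (span_add a b) -> W a b.
Proof.
  exact (group_uniformity_coset_open span_boolean_group ent small_span small_span_zero
    small_span_add W).
Qed.

Definition embed (x : X) : PointSpan :=
  exist _ (point x) (ex_intro _ (x :: nil) (eq_sym (addx0 (bool_fun_group SatSet) (point x)))).

Lemma class_saturated V y : equiv_rel V -> saturated V (V y).
Proof. intros [_ [_ trans]] a b vab vya; exact (trans _ _ _ vya vab). Qed.

Definition eq_class V (hV : ent V) (hE : equiv_rel V) (y : X) : SatSet :=
  exist _ (V y) (ex_intro _ V (conj hV (class_saturated y hE))).

Lemma small_point_class V (hV : ent V) (hE : equiv_rel V) f x y :
  small V (bxor (point x) f) -> f (eq_class hV hE y) = true -> V y x.
Proof.
  intros h fy; apply pbool_true; change (point x (eq_class hV hE y) = true).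
  rewrite (small_bxor_agree (eq_class hV hE y) h); [exact fy | apply class_saturated, hE].
Qed.

Lemma small_points_related V x y :
  ent V -> equiv_rel V -> small V (bxor (point x) (point y)) -> V x y.
Proof.
  intros hV hE h; apply (proj1 (proj2 hE)), (small_point_class hV hE y h).
  apply pbool_true, (proj1 hE).
Qed.

Hypothesis Hhaus : hausdorff_unif ent.
Hypothesis Hna : non_archimedean_unif ent.

Lemma embed_uniform_embedding :
  uniform_embedding ent (group_uniformity span_add span_zero (fun a => a) span_open) embed.
Proof.
  split; [|split].
  - intros x y hxy; apply Hhaus; intros U hU; destruct (Hna hU) as [V [hV [hE VU]]].
    apply VU, (small_points_related hV hE).
    apply (f_equal (@proj1_sig _ _)) in hxy; simpl in hxy.
    rewrite hxy, (addxx (bool_fun_group SatSet)); apply small_zero.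
  - intros W hW; apply group_uniformity_span in hW; destruct hW as [V [hV hW]].
    exists (fun x y => V x y /\ V y x); split; [now apply ent_sym_and|].
    intros x y [vxy vyx]; apply hW, small_point_bxor; assumption.
  - intros U hU; destruct (Hna hU) as [V [hV [hE VU]]].
    exists (fun a b => small_span V (span_add a b)); split.
    + apply group_uniformity_span; now exists V.
    + intros x y h; apply VU, (small_points_related hV hE), h.
Qed.

Lemma sum_points_nodup l : exists l', NoDup l' /\ sum_points l = sum_points l'.
Proof.
  pose proof (bool_fun_group SatSet) as HR.
  induction l as [|x l [l' [nd e]]].
  - exists nil; split; [constructor | reflexivity].
  - simpl; rewrite e; destruct (classic (In x l')) as [xl | xl].
    + destruct (in_split x l' xl) as [l1 [l2 ->]]; exists (l1 ++ l2).
      split; [exact (NoDup_remove_1 _ _ _ nd)|].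
      rewrite !sum_points_app; simpl.
      now rewrite (addCA HR (sum_points l1)), (addKx HR).
    + exists (x :: l'); split; [now constructor | reflexivity].
Qed.

Lemma sum_points_outside l (S : SatSet) :
  (forall z, In z l -> ~ proj1_sig S z) -> sum_points l S = false.
Proof.
  induction l as [|z l IH]; intro out; [reflexivity|]; simpl; unfold bxor.
  rewrite IH by (intros; apply out; now right).
  destruct (point z S) eqn:e; [|reflexivity].
  exfalso; apply (out z (or_introl eq_refl)), pbool_true, e.
Qed.

Lemma sum_points_class V (hV : ent V) (hE : equiv_rel V) y l :
  (forall z, In z l -> ~ V y z) -> sum_points (y :: l) (eq_class hV hE y) = true.
Proof.
  intro out; simpl; unfold bxor; rewrite sum_points_outside by exact out.
  replace (point y _) with true; [reflexivity|].
  symmetry; apply pbool_true, (proj1 hE y).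
Qed.

(* The empty sum differs from every point on the whole space; a sum of two or more
   distinct points is 1 on the classes of two of them, while a point is 1 on just one. *)
Lemma sum_points_far l : NoDup l -> (forall x, sum_points l <> point x) ->
  exists V, ent V /\ forall x, ~ small V (bxor (point x) (sum_points l)).
Proof.
  intros nd not_point; destruct l as [|y1 [|y2 rest]].
  - exists (fun _ _ => True); split; [exact (ent_full Hunif)|]; intros x hx.
    pose (whole := exist _ (fun _ : X => True)
      (ex_intro _ _ (conj (ent_full Hunif) (fun _ _ _ h => h))) : SatSet).
    specialize (hx whole (fun _ _ _ h => h)); unfold bxor, point in hx; simpl in hx.
    now rewrite (proj2 (pbool_true _) I) in hx.
  - exfalso; apply (not_point y1), (addx0 (bool_fun_group SatSet)).
  - inversion nd as [|? ? n1 nd2]; inversion nd2 as [|? ? n2 _]; subst.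
    destruct (separating_equiv_ent Hunif Hhaus Hna (y1 :: y2 :: rest)) as [V [hV [hE sepV]]].
    exists V; split; [exact hV|]; intros x hx.
    assert (v1 : V y1 x).
    { apply (small_point_class hV hE y1 hx), sum_points_class.
      intros z hz v; assert (y1 = z) as <- by (apply sepV; simpl in *; tauto).
      exact (n1 hz). }
    assert (v2 : V y2 x).
    { apply (small_point_class hV hE y2 hx); simpl.
      rewrite (addCA (bool_fun_group SatSet)); apply (sum_points_class hV hE y2 (y1 :: rest)).
      intros z hz v; assert (y2 = z) as <- by (apply sepV; simpl in *; tauto).
      destruct hz as [e | hz]; [apply n1; now left | exact (n2 hz)]. }
    apply n1; left; apply sepV; simpl; auto.
    destruct hE as [_ [sym trans]]; exact (trans _ _ _ v2 (sym _ _ v1)).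
Qed.

Lemma embed_closed : closed_top span_open (fun a => exists x, embed x = a).
Proof.
  intros a not_embed; destruct (proj2_sig a) as [l0 hl0], (sum_points_nodup l0) as [l [nd e]].
  rewrite e in hl0; destruct (sum_points_far nd) as [V [hV far]].
  - intros x hx; apply not_embed; exists x; apply span_eq; simpl; now rewrite hl0, hx.
  - exists V; split; [exact hV|]; intros b hb [x <-]; apply (far x).
    unfold small_span in hb; simpl in hb; now rewrite <- hl0.
Qed.

Variables (G : Type) (mul : G -> G -> G) (one : G) (openG : (G -> Prop) -> Prop).
Variable pi : G -> X -> X.
Hypothesis Hpu : pi_uniform openG ent pi.

Lemma preimage_saturated (g : G) (S : SatSet) :
  exists V, ent V /\ saturated V (fun z => proj1_sig S (pi g z)).
Proof.
  destruct S as [S [V [hV sat]]]; simpl.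
  destruct (Hpu hV g) as [d [O [hd [[O' [_ [O'g O'O]]] hunif]]]].
  exists d; split; [exact hd|]; intros x y dxy Sx.
  exact (sat _ _ (hunif g x y (O'O g O'g) dxy) Sx).
Qed.

Definition preimage (g : G) (S : SatSet) : SatSet := exist _ _ (preimage_saturated g S).

Definition translate (g : G) (f : SatSet -> bool) : SatSet -> bool := fun S => f (preimage g S).

Lemma translate_sum_points (g : G) l : translate g (sum_points l) = sum_points (map (pi g) l).
Proof. induction l as [|x l IH]; simpl; [reflexivity|]; now rewrite <- IH. Qed.

Definition span_act (g : G) (a : PointSpan) : PointSpan.
Proof.
  exists (translate g (proj1_sig a)).
  destruct (proj2_sig a) as [l ->]; exists (map (pi g) l); apply translate_sum_points.
Defined.

Lemma embed_equivariant (g : G) x : embed (pi g x) = span_act g (embed x).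
Proof. now apply span_eq. Qed.

Lemma span_act_additive (g : G) a b :
  span_act g (span_add a b) = span_add (span_act g a) (span_act g b).
Proof. now apply span_eq. Qed.

Lemma span_act_action : is_action mul one pi -> is_action mul one span_act.
Proof.
  intros [act_one act_mul]; split; [intro a | intros g h a]; apply span_eq; simpl;
    apply functional_extensionality; intro S; unfold translate; f_equal; apply sat_set_eq;
    apply functional_extensionality; intro z; simpl; [now rewrite act_one | now rewrite act_mul].
Qed.

Lemma small_translate d V (g : G) f :
  (forall x y, d x y -> V (pi g x) (pi g y)) -> small d f -> small V (translate g f).
Proof. intros hu hf S sat; apply hf; intros x y dxy Sx; exact (sat _ _ (hu x y dxy) Sx). Qed.

Lemma span_act_equicontinuous (g : G) V : ent V -> exists O d, nbhd_top openG g O /\ ent d /\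
  forall g' a, O g' -> small_span d a -> small_span V (span_act g' a).
Proof.
  intro hV; destruct (Hpu hV g) as [d [O [hd [hO hunif]]]].
  exists O, d; split; [exact hO|]; split; [exact hd|].
  intros g' a Og' ha; apply (small_translate (d := d)); auto.
Qed.

Hypothesis HtopG : is_topology openG.
Hypothesis Hcont : continuous2 (nbhd_top openG) (nbhd_unif ent) (nbhd_unif ent) pi.

Lemma point_orbit_continuous (g : G) x V : ent V -> exists O, nbhd_top openG g O /\
  forall g', O g' -> small V (bxor (point (pi g' x)) (point (pi g x))).
Proof.
  intro hV; destruct (@Hcont g x (fun y => V (pi g x) y /\ V y (pi g x))) as [O [B [hO [hB hOB]]]].
  - exists (fun y z => V y z /\ V z y); split; [now apply ent_sym_and | auto].
  - exists O; split; [exact hO|]; intros g' Og'.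
    assert (Bx : B x) by (destruct hB as [U [hU hUB]]; apply hUB, (ent_refl Hunif), hU).
    destruct (hOB g' x Og' Bx); now apply small_point_bxor.
Qed.

Lemma sum_points_orbit_continuous (g : G) l V : ent V -> exists O, nbhd_top openG g O /\
  forall g', O g' -> small V (bxor (sum_points (map (pi g') l)) (sum_points (map (pi g) l))).
Proof.
  intro hV; induction l as [|x l [O1 [hO1 h1]]].
  - exists (fun _ => True); split; [now apply nbhd_top_full|].
    intros; apply small_bxor; apply small_zero.
  - destruct (point_orbit_continuous g x hV) as [O2 [hO2 h2]].
    exists (fun g' => O1 g' /\ O2 g'); split; [now apply nbhd_top_and|].
    intros g' [o1 o2]; simpl; rewrite (addACA (bool_fun_group SatSet)).
    apply small_bxor; auto.
Qed.

Lemma span_orbit_continuous (g : G) a V : ent V -> exists O, nbhd_top openG g O /\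
  forall g', O g' -> small_span V (span_add (span_act g' a) (span_act g a)).
Proof.
  intro hV; destruct a as [f [l ->]]; unfold small_span; simpl.
  setoid_rewrite translate_sum_points; now apply sum_points_orbit_continuous.
Qed.

Lemma span_act_continuous :
  continuous2 (nbhd_top openG) (nbhd_top span_open) (nbhd_top span_open) span_act.
Proof.
  exact (coset_open_action_continuous span_boolean_group small_span_zero small_span_add
    span_act HtopG span_act_additive span_act_equicontinuous span_orbit_continuous).
Qed.

End PointSpan.

Theorem theorem6p5
  (G : Type) (mul : G -> G -> G) (one : G) (inv : G -> G)
  (openG : (G -> Prop) -> Prop)
  (HG : topological_group mul one inv openG)
  (X : Type) (ent : (X -> X -> Prop) -> Prop)
  (Hunif : is_uniformity ent) (Hhaus : hausdorff_unif ent)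
  (Hna : non_archimedean_unif ent)
  (pi : G -> X -> X) (Hact : is_action mul one pi)
  (Hcont : continuous2 (nbhd_top openG) (nbhd_unif ent) (nbhd_unif ent) pi)
  (Hpu : pi_uniform openG ent pi) :
  exists (E : Type) (add : E -> E -> E) (zero : E) (openE : (E -> Prop) -> Prop),
    boolean_group add zero /\
    topological_group add zero (fun a => a) openE /\
    hausdorff_top openE /\
    non_archimedean_topgroup add zero (fun a => a) openE /\
    exists tau : G -> E -> E,
      is_action mul one tau /\
      (forall g a b, tau g (add a b) = add (tau g a) (tau g b)) /\
      continuous2 (nbhd_top openG) (nbhd_top openE) (nbhd_top openE) tau /\
      exists alpha : X -> E,
        (forall g x, alpha (pi g x) = tau g (alpha x)) /\
        uniform_embedding ent (group_uniformity add zero (fun a => a) openE) alpha /\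
        closed_top openE (fun e => exists x, alpha x = e).
Proof.
  destruct HG as [_ [HtopG _]].
  exists (PointSpan ent), (@span_add X ent), (span_zero ent), (@span_open X ent).
  split; [apply span_boolean_group|].
  split; [now apply span_topological_group|].
  split; [apply span_hausdorff|].
  split; [apply span_non_archimedean|].
  exists (span_act Hpu); split; [now apply span_act_action|].
  split; [apply span_act_additive|].
  split; [now apply span_act_continuous|].
  exists (embed ent); split; [apply embed_equivariant|].
  split; [now apply embed_uniform_embedding|].
  now apply embed_closed.
Qed.
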